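(* Let $(X,Y)$ be a pair of real random variables whose marginal distributions are light-tailed. Then there exists a coupling of $(X,Y)$ with a pair $(\xi,\eta)$ of i.i.d. random variables whose common distribution is light-tailed, such that $$\max(X,Y)\le\min(\xi,\eta)\quad\text{a.s.}$$
   Context: A real random variable $Z$ (or its distribution) is light-tailed if $\mathbf E\,e^{cZ}<\infty$ for some constant $c>0$. *)

From HB Require Import structures.
From mathcomp Require Import all_boot all_order all_algebra.
From mathcomp Require Import all_classical all_reals all_analysis.
Set Implicit Arguments. Unset Strict Implicit. Unset Printing Implicit Defensive.
Import Order.TTheory GRing.Theory Num.Theory.
Local Open Scope classical_set_scope.
Local Open Scope ring_scope.

Definition light_tailed (d : measure_display) (T : measurableType d) (R : realType)
  (P : probability T R) (Z : T -> R) : Prop :=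
  exists c : R, 0 < c /\ (\int[P]_x (expR (c * Z x))%:E < +oo)%E.

Definition ident_distr (d : measure_display) (T : measurableType d) (R : realType)
  (P : probability T R) (Z1 Z2 : T -> R) : Prop :=
  forall A : set R, measurable A -> P (Z1 @^-1` A) = P (Z2 @^-1` A).

Definition indep2 (d : measure_display) (T : measurableType d) (R : realType)
  (P : probability T R) (Z1 Z2 : T -> R) : Prop :=
  forall A B : set R, measurable A -> measurable B ->
    P (Z1 @^-1` A `&` Z2 @^-1` B) = (P (Z1 @^-1` A) * P (Z2 @^-1` B))%E.

Definition same_joint_law (d : measure_display) (T : measurableType d)
  (d' : measure_display) (T' : measurableType d') (R : realType)
  (P : probability T R) (X Y : T -> R) (P' : probability T' R) (X' Y' : T' -> R) : Prop :=
  forall A : set (R * R)%type, measurable A ->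
    P' ((fun t => (X' t, Y' t)) @^-1` A) = P ((fun t => (X t, Y t)) @^-1` A).

From HB Require Import structures.
From mathcomp Require Import all_boot all_order all_algebra.
From mathcomp Require Import all_classical all_reals all_analysis.
From mathcomp Require Import ring lra.
Set Implicit Arguments. Unset Strict Implicit. Unset Printing Implicit Defensive.
Import Order.TTheory GRing.Theory Num.Theory.
Local Open Scope classical_set_scope.
Local Open Scope ring_scope.

(* Let N := floor (max X Y) + 1, an integer majorant of X and Y; by the
   exponential Markov inequality its tail Q k := P(N >= k) is at most B e^(-c k).
   Let xi, eta be i.i.d. on nat with tail P(xi >= k) = sqrt (Q k).  Then
   P(min xi eta >= k) = Q k, so min xi eta has the law of N, while the tail
   sqrt (Q k) <= sqrt B e^(-c k / 2) is still exponentially small.  The coupling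
   draws w from P and then (xi, eta) from the conditional law of the pair given
   min xi eta = N w, so that max X Y <= N = min xi eta almost surely. *)

Lemma nneseries_pred1 (R : realType) (f : nat -> \bar R) n :
  (0 <= f n)%E -> (\sum_(k <oo | k == n) f k = f n)%E.
Proof.
move=> f0; rewrite (@nneseriesD1 _ _ n) //=; last by move=> k /eqP ->.
by rewrite eseries_pred0 ?adde0 // => k /=; case: eqP.
Qed.

Section root_tail.
Variables (R : realType) (Q : nat -> R).
Hypotheses (Q_ge0 : forall k, 0 <= Q k) (Q_nonincr : forall k, Q k.+1 <= Q k).

Definition root_tail k := Num.sqrt (Q k).
Definition root_pmf k := root_tail k - root_tail k.+1.
Local Notation r := root_tail.
Local Notation p := root_pmf.

Lemma root_tail_ge0 k : 0 <= r k. Proof. exact: sqrtr_ge0. Qed.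

Lemma root_tail_sqr k : r k ^+ 2 = Q k. Proof. exact: sqr_sqrtr. Qed.

Lemma root_pmf_ge0 k : 0 <= p k. Proof. by rewrite subr_ge0 ler_sqrt. Qed.

Lemma root_pmf_le_tail k : p k <= r k. Proof. by rewrite gerBl root_tail_ge0. Qed.

Lemma tail_diff_root_pmf n : Q n - Q n.+1 = p n * (r n + r n.+1).
Proof. by rewrite -!root_tail_sqr /root_pmf; ring. Qed.

Lemma root_pmf_eq0 n : Q n - Q n.+1 = 0 -> p n = 0.
Proof.
rewrite tail_diff_root_pmf => /eqP; rewrite mulf_eq0 => /orP[/eqP //|].
rewrite paddr_eq0 ?root_tail_ge0 // => /andP[/eqP rn /eqP rSn].
by rewrite /root_pmf rn rSn subr0.
Qed.

Lemma root_pmf_partial_tail n m : (n <= m)%N -> \sum_(n <= k < m) p k = r n - r m.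
Proof.
move=> nm; rewrite /root_pmf; under eq_bigr do rewrite -opprB.
by rewrite sumrN telescope_sumr // opprB.
Qed.

Lemma root_tail_exp_bound (B c : R) : (forall k, Q k <= B * expR (- (c * k%:R))) ->
  forall k, r k <= Num.sqrt B * expR (- (c / 2 * k%:R)).
Proof.
move=> QB k; have B0 : 0 <= B.
  by apply: le_trans (Q_ge0 0) _; have := QB 0%N; rewrite mulr0 oppr0 expR0 mulr1.
have expE : expR (- (c / 2 * k%:R)) ^+ 2 = expR (- (c * k%:R)).
  by rewrite -expRM_natl; congr expR; field.
rewrite -[expR (- _)]ger0_norm ?expR_ge0 // -sqrtr_sqr -sqrtrM ?sqr_ge0 // expE.
by rewrite ler_sqrt ?QB //; exact: le_trans (Q_ge0 k) (QB k).
Qed.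

Lemma root_pmf_exp_moment (B c : R) : 0 < c ->
  (forall k, Q k <= B * expR (- (c * k%:R))) ->
  (\sum_(k <oo) (expR (c / 4 * k%:R) * p k)%:E < +oo)%E.
Proof.
move=> c0 QB; set v := expR (- (c / 4)).
have v0 : 0 < v := expR_gt0 _.
have v1 : `|v| < 1 by rewrite gtr0_norm // expR_lt1 oppr_lt0 divr_gt0.
have term k : expR (c / 4 * k%:R) * p k <= Num.sqrt B * v ^+ k.
  have -> : Num.sqrt B * v ^+ k =
      expR (c / 4 * k%:R) * (Num.sqrt B * expR (- (c / 2 * k%:R))).
    by rewrite /v -expRM_natl mulrCA -expRD; congr (_ * expR _); field.
  apply: ler_wpM2l; first exact: expR_ge0.
  exact: le_trans (root_pmf_le_tail k) (root_tail_exp_bound QB k).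
apply: (@le_lt_trans _ _ (\sum_(k <oo) (Num.sqrt B * v ^+ k)%:E)%E).
  apply: lee_nneseries => [k _ _|k _]; last by rewrite lee_fin term.
  by rewrite lee_fin mulr_ge0 ?expR_ge0 ?root_pmf_ge0.
apply: (@le_lt_trans _ _ (Num.sqrt B / (1 - v))%:E); last by rewrite ltey.
apply: lime_le.
  apply: is_cvg_ereal_nneg_natsum => k _.
  by rewrite lee_fin mulr_ge0 ?sqrtr_ge0 // exprn_ge0 // ltW.
by apply: nearW => m; rewrite sumEFin lee_fin; exact: geometric_le_lim (sqrtr_ge0 B) v0 v1.
Qed.

Hypothesis Q_cvg0 : Q k @[k --> \oo] --> 0.

Lemma root_tail_cvg0 : r k @[k --> \oo] --> 0.
Proof. by rewrite -sqrtr0; apply: continuous_cvg => //; exact: sqrt_continuous. Qed.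

Lemma root_pmf_tail n : (\sum_(n <= k <oo) (p k)%:E = (r n)%:E)%E.
Proof.
apply/cvg_lim => //; apply: (@cvg_trans _ ((fun m => (r n - r m)%:E) @ \oo)).
  apply: near_eq_cvg; near=> m; rewrite sumEFin root_pmf_partial_tail //.
  by near: m; exact: nbhs_infty_ge.
apply: cvg_EFin; first exact: nearW.
by rewrite -[X in _ --> X]subr0; apply: cvgB; [exact: cvg_cst|exact: root_tail_cvg0].
Unshelve. all: by end_near.
Qed.

Lemma root_pmf_sum : Q 0 = 1 -> (\sum_(k <oo) (p k)%:E = 1)%E.
Proof. by move=> Q01; rewrite root_pmf_tail /root_tail Q01 sqrtr1. Qed.

Definition root_law (A : set nat) : \bar R := (\sum_(k <oo | k \in A) (p k)%:E)%E.

Lemma root_law1 k : root_law [set k] = (p k)%:E.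
Proof.
rewrite /root_law (@eq_eseriesl _ _ (pred1 k)) => [|i]; last by rewrite in_set1.
by rewrite nneseries_pred1 // lee_fin root_pmf_ge0.
Qed.

Lemma root_lawT : Q 0 = 1 -> root_law setT = 1%E.
Proof.
move=> Q01; rewrite /root_law (@eq_eseriesl _ _ xpredT) ?root_pmf_sum // => i.
by rewrite in_setT.
Qed.

Lemma root_law_fin_num A : root_law A \is a fin_num.
Proof.
rewrite ge0_fin_numE; last by apply: nneseries_ge0 => k _ _; rewrite lee_fin root_pmf_ge0.
apply: (@le_lt_trans _ _ (\sum_(k <oo) (p k)%:E)%E); last by rewrite root_pmf_tail ltry.
rewrite /root_law eseries_mkcond.
by apply: lee_nneseries => k *; case: ifP; rewrite ?lee_fin ?root_pmf_ge0.
Qed.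

Lemma root_pmf_min_row i n :
  (\sum_(j <oo) (if minn i j == n then (p i * p j)%:E else 0) =
   if (i < n)%N then 0 else if i == n then (p n * r n)%:E else (p i * p n)%:E)%E.
Proof.
case: (ltngtP i n) => [lt|gt|->].
- rewrite eseries0 // => j _ _; rewrite ifF //; apply/negbTE.
  by rewrite neq_ltn (leq_ltn_trans (geq_minl i j) lt).
- rewrite (@eq_eseriesr _ _ (fun j => if j == n then (p i * p j)%:E else 0)).
    by rewrite -eseries_mkcond nneseries_pred1 // lee_fin mulr_ge0 ?root_pmf_ge0.
  move=> j _; case: (leqP i j) => ij //.
  by rewrite (gtn_eqF gt) ifF //; apply/negbTE; rewrite gtn_eqF // (leq_trans gt ij).
- rewrite (@eq_eseriesr _ _ (fun j => if (n <= j)%N then (p n)%:E * (p j)%:E else 0)%E).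
    rewrite -eseries_mkcond -ereal_series nneseriesZl ?root_pmf_tail //.
    by move=> k _; rewrite lee_fin root_pmf_ge0.
  by move=> j _; case: (leqP n j) => nj; rewrite ?eqxx ?EFinM // ltn_eqF.
Qed.

Lemma root_pmf_min_law n :
  (\sum_(i <oo) \sum_(j <oo) (if minn i j == n then (p i * p j)%:E else 0) =
   (Q n - Q n.+1)%:E)%E.
Proof.
under eq_eseriesr do rewrite root_pmf_min_row.
rewrite (@nneseriesD1 _ _ n xpredT) //; last first.
  by move=> k _; do 2?case: ifP => _ //;
    rewrite lee_fin mulr_ge0 ?root_pmf_ge0 ?root_tail_ge0.
rewrite ltnn eqxx /= eseries_mkcond.
rewrite (@eq_eseriesr _ _
  (fun k => if (n.+1 <= k)%N then (p n)%:E * (p k)%:E else 0)%E); last first.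
  by move=> k _; case: (ltngtP k n) => kn //=; rewrite mulrC EFinM.
rewrite -eseries_mkcond -ereal_series nneseriesZl ?root_pmf_tail; last first.
  by move=> k _; rewrite lee_fin root_pmf_ge0.
by rewrite -EFinM -EFinD tail_diff_root_pmf mulrDr.
Qed.

End root_tail.

Lemma measurable_fun_nat_ge d (T : measurableType d) (f : T -> nat) :
  (forall k, measurable [set t | (k <= f t)%N]) -> measurable_fun setT f.
Proof.
move=> mf _ S _; rewrite setTI (_ : f @^-1` S =
    \bigcup_(n in S) ([set t | (n <= f t)%N] `\` [set t | (n.+1 <= f t)%N])).
  by apply: bigcup_measurable => n _; exact: measurableD.
apply/seteqP; split => t /=; first by move=> St; exists (f t) => //=; rewrite ltnn.
move=> [n Sn [/= nf /negP]]; rewrite -leqNgt => fn.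
by have -> : f t = n by apply/eqP; rewrite eqn_leq fn nf.
Qed.

Lemma measurable_natr (R : realType) : measurable_fun setT (fun k : nat => (k%:R : R)).
Proof. by []. Qed.

Lemma measurable_nat2 (S : set (nat * nat)) : measurable S.
Proof.
rewrite (_ : S = \bigcup_i ([set i] `*` [set j | S (i, j)])).
  by apply: bigcupT_measurable => i; exact: measurableX.
by apply/seteqP; split => [[i j] Sij|[i j] [k _ [/= -> //]]]; exists i.
Qed.

Lemma ge0_integral_nat_valued d (T : measurableType d) (R : realType)
    (mu : {measure set T -> \bar R}) (f : T -> nat) (g : nat -> R) :
  measurable_fun setT f -> (forall k, 0 <= g k) ->
  (\int[mu]_x (g (f x))%:E = \sum_(k <oo) (g k)%:E * mu (f @^-1` [set k]))%E.
Proof.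
move=> mf g0; have mS k : measurable (f @^-1` [set k]).
  by rewrite -[X in measurable X]setTI; exact: mf.
transitivity (\int[mu]_x \sum_(k <oo) (g k * \1_(f @^-1` [set k]) x)%:E)%E.
  apply: eq_integral => x _.
  rewrite -(@nneseries_pred1 _ (fun k => (g k)%:E) (f x)) ?lee_fin //.
  rewrite eseries_mkcond; apply: eq_eseriesr => k _; rewrite indicE.
  case: (eqVneq k (f x)) => [->|kf]; first by rewrite mem_set ?mulr1.
  by rewrite memNset ?mulr0 // => /esym/eqP; rewrite (negbTE kf).
rewrite integral_nneseries //; last 2 first.
- move=> k; apply/measurable_realfun.measurable_EFinP.
  exact: measurableT_comp (measurable_realfun.mulrl_measurable _)
    (measurable_realfun.measurable_indic (mS k)).
- by move=> k x _; rewrite lee_fin mulr_ge0.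
apply: eq_eseriesr => k _.
rewrite (@integralZl_indic _ _ _ mu _ measurableT (fun _ => f @^-1` [set k])) //.
  by rewrite integral_indic // setIT.
by rewrite ltNge g0.
Qed.

Section min_coupling.
Context (R : realType) (d : measure_display) (T : measurableType d)
  (P : probability T R) (N : T -> nat) (mN : measurable_fun setT N).

Lemma measurable_nat_preimage (S : set nat) : measurable (N @^-1` S).
Proof. by rewrite -[X in measurable X]setTI; exact: mN. Qed.

Lemma measurable_nat_ge k : measurable [set t | (k <= N t)%N].
Proof. exact: (measurable_nat_preimage [set n | (k <= n)%N]). Qed.

Definition nat_tail k := fine (P [set t | (k <= N t)%N]).
Local Notation Q := nat_tail.

Lemma nat_tailE k : P [set t | (k <= N t)%N] = (Q k)%:E.
Proof. by rewrite fineK // fin_num_measure //; exact: measurable_nat_ge. Qed.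

Lemma nat_tail_ge0 k : 0 <= Q k.
Proof. by rewrite -lee_fin -nat_tailE measure_ge0. Qed.

Lemma nat_tail_le1 k : Q k <= 1.
Proof. by rewrite -lee_fin -nat_tailE probability_le1 //; exact: measurable_nat_ge. Qed.

Lemma nat_tail0 : Q 0 = 1.
Proof.
apply/EFin_inj; rewrite -nat_tailE -(@probability_setT _ _ _ P).
by congr (P _); apply/seteqP.
Qed.

Lemma nat_tail_nonincr k : Q k.+1 <= Q k.
Proof.
rewrite -lee_fin -!nat_tailE; apply: le_measure; rewrite ?inE; try exact: measurable_nat_ge.
by move=> t /ltnW.
Qed.

Lemma nat_tail_cvg0 : Q k @[k --> \oo] --> 0.
Proof.
have capE : \bigcap_k [set t | (k <= N t)%N] = set0.
  by apply/seteqP; split => // t /(_ (N t).+1 Logic.I); rewrite /= ltnn.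
have := @nonincreasing_cvg_mu _ _ _ P (fun k => [set t | (k <= N t)%N]).
rewrite capE measure0 => /(_ _ measurable_nat_ge measurable0) cvgP.
apply/fine_cvg/cvgP.
  by rewrite (le_lt_trans (probability_le1 P (measurable_nat_ge 0))) ?ltry.
by move=> m n mn; apply/subsetPset => t /=; exact: leq_trans.
Qed.

Lemma measure_level n : P (N @^-1` [set n]) = (Q n - Q n.+1)%:E.
Proof.
have -> : N @^-1` [set n] = [set t | (n <= N t)%N] `\` [set t | (n.+1 <= N t)%N].
  apply/seteqP; split => t /=; first by move=> ->; rewrite ltnn.
  by move=> [nN /negP]; rewrite -ltnNge ltnS => Nn; apply/eqP; rewrite eqn_leq Nn.
have Pfin : (P [set t | (n <= N t)%N] < +oo)%E by rewrite nat_tailE ltry.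
rewrite EFinB -!nat_tailE measureD ?setIidr //.
- by move=> t /ltnW.
- exact: (measurable_nat_ge n).
- exact: (measurable_nat_ge n.+1).
Qed.

Let p_ge0 k : 0 <= root_pmf Q k := root_pmf_ge0 nat_tail_ge0 nat_tail_nonincr k.
Local Notation p := (root_pmf Q).
Local Notation law := (root_law Q).

(* P(xi = i, eta = j | min xi eta = minn i j) for xi, eta i.i.d. with law [p];
   when that event is null this is the junk value [x / 0 = 0]. *)
Definition min_cond_pmf i j := p i * p j / (Q (minn i j) - Q (minn i j).+1).
Local Notation c := min_cond_pmf.

Lemma min_cond_pmf_ge0 i j : 0 <= c i j.
Proof. by rewrite /min_cond_pmf !mulr_ge0 ?p_ge0 ?invr_ge0 ?subr_ge0 ?nat_tail_nonincr. Qed.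

Lemma min_cond_pmfE i j : c i j * (Q (minn i j) - Q (minn i j).+1) = p i * p j.
Proof.
have [q0|q0] := eqVneq (Q (minn i j) - Q (minn i j).+1) 0; last by rewrite mulfVK.
rewrite q0 mulr0; have := root_pmf_eq0 nat_tail_ge0 q0.
by case: (leqP i j) => ij ->; rewrite ?mul0r ?mulr0.
Qed.

Lemma min_cond_pmf_sum n : Q n - Q n.+1 != 0 ->
  (\sum_(i <oo) \sum_(j <oo) (if minn i j == n then (c i j)%:E else 0) = 1)%E.
Proof.
move=> q0; have qn0 : 0 <= (Q n - Q n.+1)^-1 by rewrite invr_ge0 subr_ge0 nat_tail_nonincr.
transitivity (((Q n - Q n.+1)^-1)%:E * \sum_(i <oo) \sum_(j <oo)
    (if minn i j == n then (p i * p j)%:E else 0))%E; last first.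
  by rewrite (root_pmf_min_law nat_tail_ge0 nat_tail_nonincr nat_tail_cvg0) -EFinM mulVf.
rewrite -nneseriesZl; last first.
  by move=> i _; apply: nneseries_ge0 => j _ _; case: ifP; rewrite ?lee_fin ?mulr_ge0.
apply: eq_eseriesr => i _; rewrite -nneseriesZl; last first.
  by move=> j _; case: ifP; rewrite ?lee_fin ?mulr_ge0.
apply: eq_eseriesr => j _; case: ifPn => [/eqP ij|_]; last by rewrite mule0.
by rewrite -EFinM /min_cond_pmf ij mulrC.
Qed.

Local Notation TT := (T * (nat * nat))%type.

Lemma measurable_slice (A : set TT) i j :
  measurable A -> measurable [set t | A (t, (i, j))].
Proof.
move=> mA; have mf : measurable_fun setT (fun t : T => (t, (i, j))).
  by apply: measurable_fun_pair => //; exact: measurable_cst.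
by rewrite -[X in measurable X]setTI; exact: mf.
Qed.

(* Given N = n, the pair (i, j) is drawn from the conditional law of (xi, eta)
   given min xi eta = n. *)
Definition coupling_piece i j (A : set TT) : \bar R :=
  ((c i j)%:E * P ([set t | A (t, (i, j))] `&` N @^-1` [set minn i j]))%E.

Let coupling_piece0 i j : coupling_piece i j set0 = 0%E.
Proof. by rewrite /coupling_piece set0I measure0 mule0. Qed.

Let coupling_piece_ge0 i j A : (0 <= coupling_piece i j A)%E.
Proof. by rewrite /coupling_piece mule_ge0 // lee_fin min_cond_pmf_ge0. Qed.

Let coupling_piece_sigma_additive i j : semi_sigma_additive (coupling_piece i j).
Proof.
move=> F mF tF mUF; rewrite /coupling_piece.
rewrite [X in X @ \oo --> _](_ : _ = (fun n => (c i j)%:E *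
    \sum_(0 <= k < n) P ([set t | F k (t, (i, j))] `&` N @^-1` [set minn i j]))%E); last first.
  by apply/funext => n; rewrite ge0_sume_distrr // => k _; exact: measure_ge0.
apply: cvgeZl => //.
rewrite (_ : [set t | _] = \bigcup_k [set t | F k (t, (i, j))]); last first.
  by apply/seteqP; split => t.
rewrite setI_bigcupl; apply: measure_semi_sigma_additive.
- by move=> k; apply: measurableI; [exact: measurable_slice|exact: measurable_nat_preimage].
- apply/trivIsetP => a b _ _ ab; move/trivIsetP : tF => /(_ a b Logic.I Logic.I ab) Fab.
  apply/seteqP; split => // t [[Fa _] [Fb _]].
  by have : (F a `&` F b) (t, (i, j)) by []; rewrite Fab.
- rewrite -setI_bigcupl; apply: measurableI; last exact: measurable_nat_preimage.
  rewrite (_ : \bigcup_k _ = [set t | (\bigcup_k F k) (t, (i, j))]).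
    exact: measurable_slice.
  by apply/seteqP; split.
Qed.

HB.instance Definition _ i j := isMeasure.Build _ _ _ (coupling_piece i j)
  (coupling_piece0 i j) (coupling_piece_ge0 i j) (@coupling_piece_sigma_additive i j).

Definition min_coupling :=
  mseries (fun i => mseries (fun j => coupling_piece i j) 0) 0.

HB.instance Definition _ := Measure.on min_coupling.

Lemma min_coupling_rect (B : set T) (S : set (nat * nat)) : min_coupling (B `*` S) =
  (\sum_(i <oo) \sum_(j <oo)
     (if (i, j) \in S then (c i j)%:E * P (B `&` N @^-1` [set minn i j]) else 0))%E.
Proof.
apply: eq_eseriesr => i _; apply: eq_eseriesr => j _.
case: ifPn => [/set_mem Sij|Sij].
  by congr (_ * P (_ `&` _))%E; apply/seteqP; split => t /= => [[]|].
rewrite /= /coupling_piece (_ : _ `&` _ = set0) ?measure0 ?mule0 //.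
by apply/seteqP; split => // t /= [[_ /mem_set]]; rewrite (negbTE Sij).
Qed.

Lemma measure_level_partition B : measurable B ->
  (\sum_(n <oo) P (B `&` N @^-1` [set n]) = P B)%E.
Proof.
move=> mB; rewrite [in RHS](_ : B = \bigcup_n (B `&` N @^-1` [set n])); last first.
  by apply/seteqP; split => [t Bt|t [n _ []]] //; exists (N t).
rewrite measure_bigcup //; first by apply: eq_eseriesl => n; rewrite in_setT.
- by move=> n _; apply: measurableI => //; exact: measurable_nat_preimage.
- apply/trivIsetP => a b _ _ ab; apply/seteqP; split => // t [[_ /= Na] [_ /= Nb]].
  by move: ab; rewrite -Na -Nb eqxx.
Qed.

Lemma min_cond_pmf_level_sum B n : measurable B ->
  (\sum_(i <oo) \sum_(j <oo) (if n == minn i j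
     then (c i j)%:E * P (B `&` N @^-1` [set n]) else 0) = P (B `&` N @^-1` [set n]))%E.
Proof.
move=> mB; have mBn : measurable (B `&` N @^-1` [set n]).
  by apply: measurableI => //; exact: measurable_nat_preimage.
have [qn0|qn0] := eqVneq (Q n - Q n.+1) 0.
  have Bn0 : P (B `&` N @^-1` [set n]) = 0%E.
    apply/le_anti; rewrite measure_ge0 andbT.
    have : (P (B `&` N @^-1` [set n]) <= P (N @^-1` [set n]))%E.
      apply: le_measure; rewrite ?inE; first exact: mBn.
        exact: measurable_nat_preimage.
      exact: subIsetr.
    by rewrite measure_level qn0.
  by rewrite Bn0; do 2 (apply: eseries0 => ? _ _); rewrite mule0; case: ifP.
rewrite -[RHS]mule1 -(min_cond_pmf_sum qn0) -(fineK (fin_num_measure _ _ mBn)).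
rewrite -nneseriesZl; last first.
  by move=> i _; apply: nneseries_ge0 => j _ _; case: ifP; rewrite ?lee_fin ?min_cond_pmf_ge0.
apply: eq_eseriesr => i _; rewrite -nneseriesZl; last first.
  by move=> j _; case: ifP; rewrite ?lee_fin ?min_cond_pmf_ge0.
apply: eq_eseriesr => j _; rewrite eq_sym; case: ifP => _; last by rewrite mule0.
by rewrite fineK ?fin_num_measure // muleC.
Qed.

Lemma min_coupling_marginal B : measurable B -> min_coupling (fst @^-1` B) = P B.
Proof.
move=> mB; rewrite -setXT min_coupling_rect -measure_level_partition //.
pose h i j n := if n == minn i j
  then ((c i j)%:E * P (B `&` N @^-1` [set n]))%E else 0%E.
have g0 n : (0 <= P (B `&` N @^-1` [set n]))%E by exact: measure_ge0.
have h0 i j n : (0 <= h i j n)%E.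
  by rewrite /h; case: ifP; rewrite // mule_ge0 ?lee_fin ?min_cond_pmf_ge0.
transitivity (\sum_(n <oo) \sum_(i <oo) \sum_(j <oo) h i j n)%E.
  rewrite [RHS]nneseries_interchange; last by move=> n i; exact: nneseries_ge0.
  apply: eq_eseriesr => i _; rewrite [RHS]nneseries_interchange //.
  apply: eq_eseriesr => j _; rewrite in_setT -eseries_mkcond nneseries_pred1 //.
  by have := h0 i j (minn i j); rewrite /h eqxx.
by apply: eq_eseriesr => n _; exact: min_cond_pmf_level_sum.
Qed.

Let law_fin A : law A \is a fin_num :=
  root_law_fin_num nat_tail_ge0 nat_tail_nonincr nat_tail_cvg0 A.

Lemma min_coupling_pair (A B : set nat) :
  min_coupling ([set w | A w.2.1] `&` [set w | B w.2.2]) = (law A * law B)%E.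
Proof.
rewrite (_ : _ `&` _ = setT `*` (A `*` B)); last by apply/seteqP; split => w /= [].
rewrite min_coupling_rect.
transitivity (\sum_(i <oo) (if i \in A then (p i)%:E * law B else 0))%E.
  apply: eq_eseriesr => i _; case: ifPn => iA; last first.
    by apply: eseries0 => j _ _; rewrite in_setX /= (negbTE iA).
  rewrite /root_law -nneseriesZl; last by move=> j _; rewrite lee_fin.
  rewrite [RHS]eseries_mkcond; apply: eq_eseriesr => j _.
  rewrite in_setX /= iA /=; case: ifP => // _.
  by rewrite setTI measure_level -EFinM min_cond_pmfE.
rewrite -(fineK (law_fin B)) -eseries_mkcond.
under eq_eseriesr do rewrite muleC.
by rewrite nneseriesZl 1?muleC // => i _; rewrite lee_fin.
Qed.

Lemma min_coupling_setT : min_coupling setT = 1%E.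
Proof. by rewrite -(preimage_setT fst) min_coupling_marginal // probability_setT. Qed.

HB.instance Definition _ :=
  Measure_isProbability.Build _ _ _ min_coupling min_coupling_setT.

Lemma min_coupling_min : {ae min_coupling, forall w, minn w.2.1 w.2.2 = N w.1}.
Proof.
exists [set w | minn w.2.1 w.2.2 != N w.1]; split.
- rewrite (_ : [set w | _] = \bigcup_n (N @^-1` [set n] `*` [set ij | minn ij.1 ij.2 != n])).
    apply: bigcupT_measurable => n; apply: measurableX.
      exact: measurable_nat_preimage.
    exact: measurable_nat2.
  by apply/seteqP; split => [w /= h|w [n _ [/= ->]]] //; exists (N w.1).
- apply: eseries0 => i _ _; apply: eseries0 => j _ _.
  rewrite /= /coupling_piece (_ : _ `&` _ = set0) ?measure0 ?mule0 //.
  by apply/seteqP; split => // t [/= /eqP minN Nt]; exact: minN (esym Nt).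
- by move=> w /= /eqP.
Qed.

Lemma min_coupling_fst (A : set nat) : min_coupling [set w | A w.2.1] = law A.
Proof.
have := min_coupling_pair A setT; rewrite (root_lawT nat_tail_cvg0 nat_tail0) mule1 => <-.
by congr (min_coupling _); apply/seteqP; split => w /= => [|[]].
Qed.

Lemma min_coupling_snd (A : set nat) : min_coupling [set w | A w.2.2] = law A.
Proof.
have := min_coupling_pair setT A; rewrite (root_lawT nat_tail_cvg0 nat_tail0) mul1e => <-.
by congr (min_coupling _); apply/seteqP; split => w /= => [|[]].
Qed.

Local Notation xi := (fun w : TT => (w.2.1)%:R : R).
Local Notation eta := (fun w : TT => (w.2.2)%:R : R).

Lemma min_coupling_indep : indep2 min_coupling xi eta.
Proof.
move=> A B _ _; have := min_coupling_pair [set k | A k%:R] [set k | B k%:R].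
by rewrite -(min_coupling_fst [set k | A k%:R]) -(min_coupling_snd [set k | B k%:R]).
Qed.

Lemma min_coupling_ident_distr : ident_distr min_coupling xi eta.
Proof.
move=> A _; have := min_coupling_fst [set k | A k%:R].
by rewrite -(min_coupling_snd [set k | A k%:R]).
Qed.

Lemma min_coupling_light_tailed (B c : R) : 0 < c ->
  (forall k, Q k <= B * expR (- (c * k%:R))) -> light_tailed min_coupling xi.
Proof.
move=> c0 QB; exists (c / 4); split; first by rewrite divr_gt0.
rewrite (@ge0_integral_nat_valued _ _ _ min_coupling (fun w : TT => w.2.1)
  (fun k => expR (c / 4 * k%:R))); last 2 first.
- exact: measurableT_comp measurable_snd.
- by move=> k; exact: expR_ge0.
rewrite (@eq_eseriesr _ _ (fun k => (expR (c / 4 * k%:R) * p k)%:E)).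
  exact: (root_pmf_exp_moment nat_tail_ge0 nat_tail_nonincr c0 QB).
move=> k _; rewrite EFinM -(root_law1 nat_tail_ge0 nat_tail_nonincr).
by congr (_ * _)%E; exact: min_coupling_fst.
Qed.

End min_coupling.

Section exp_markov.
Context (R : realType) (d : measure_display) (T : measurableType d)
  (P : probability T R).

Lemma measurable_superlevel (f : T -> R) a :
  measurable_fun setT f -> measurable [set t | a <= f t].
Proof.
move=> mf; rewrite (_ : [set t | a <= f t] = f @^-1` `[a, +oo[).
  by rewrite -[X in measurable X]setTI; apply: mf => //; exact: measurable_itv.
by apply/seteqP; split => t /=; rewrite in_itv /= andbT.
Qed.

Lemma exp_tail_bound (f : T -> R) (b a : R) : measurable_fun setT f -> 0 < b ->
  (\int[P]_x (expR (b * f x))%:E < +oo)%E ->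
  fine (P [set t | a <= f t]) <= fine (\int[P]_x (expR (b * f x))%:E) * expR (- (b * a)).
Proof.
move=> mf b0 fint.
have fin_int : (\int[P]_x (expR (b * f x))%:E)%E \is a fin_num.
  by rewrite ge0_fin_numE // integral_ge0 // => x _; rewrite lee_fin expR_ge0.
have mA := measurable_superlevel a mf.
rewrite -lee_fin EFinM !fineK ?fin_num_measure //.
pose F := MeasurableFun.Pack (MeasurableFun.Class (isMeasurableFun.Build _ _ _ _ _ mf)).
apply: le_trans (@chernoff _ _ _ P F b a b0) _.
rewrite /mmt_gen_fun unlock; under eq_integral do rewrite /= mulrC.
exact: lexx.
Qed.

End exp_markov.

Section ceil_max.
Context (R : realType) (d : measure_display) (T : measurableType d)
  (P : probability T R) (X Y : T -> R)
  (mX : measurable_fun setT X) (mY : measurable_fun setT Y).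

Definition ceil_max t := (Num.truncn (Num.max (X t) (Y t))).+1.

Lemma max_le_ceil_max t : Num.max (X t) (Y t) <= (ceil_max t)%:R.
Proof. exact/ltW/truncnS_gt. Qed.

Lemma ceil_max_geSS k : [set t | (k.+2 <= ceil_max t)%N] =
  [set t | k.+1%:R <= X t] `|` [set t | k.+1%:R <= Y t].
Proof.
apply/seteqP; split => t; rewrite /= ltnS truncn_gt_nat le_max.
  by case/orP; [left|right].
by case=> ->; rewrite ?orbT.
Qed.

Lemma measurable_ceil_max : measurable_fun setT ceil_max.
Proof.
apply: measurable_fun_nat_ge => -[|[|k]].
- by rewrite (_ : [set t | _] = setT) //; apply/seteqP.
- by rewrite (_ : [set t | _] = setT) //; apply/seteqP.
- by rewrite ceil_max_geSS; apply: measurableU; exact: measurable_superlevel.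
Qed.

Variables (c1 c2 : R).
Hypotheses (c1_gt0 : 0 < c1) (c2_gt0 : 0 < c2)
  (EX : (\int[P]_x (expR (c1 * X x))%:E < +oo)%E)
  (EY : (\int[P]_x (expR (c2 * Y x))%:E < +oo)%E).
Let c := Num.min c1 c2.
Let Ex := fine (\int[P]_x (expR (c1 * X x))%:E).
Let Ey := fine (\int[P]_x (expR (c2 * Y x))%:E).

Let Ex_ge0 : 0 <= Ex.
Proof. by apply: fine_ge0; apply: integral_ge0 => x _; rewrite lee_fin expR_ge0. Qed.

Let Ey_ge0 : 0 <= Ey.
Proof. by apply: fine_ge0; apply: integral_ge0 => x _; rewrite lee_fin expR_ge0. Qed.

Let exp_tail_min (b : R) k : c <= b -> expR (- (b * k%:R)) <= expR (- (c * k%:R)).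
Proof. by move=> cb; rewrite ler_expR lerN2 ler_wpM2r. Qed.

Lemma ceil_max_tailSS k :
  nat_tail P ceil_max k.+2 <= (Ex + Ey) * expR (- (c * k.+1%:R)).
Proof.
have mXk := measurable_superlevel k.+1%:R mX.
have mYk := measurable_superlevel k.+1%:R mY.
have mU : measurable ([set t | k.+1%:R <= X t] `|` [set t | k.+1%:R <= Y t]).
  exact: measurableU.
have tailU : nat_tail P ceil_max k.+2 <=
    fine (P [set t | k.+1%:R <= X t]) + fine (P [set t | k.+1%:R <= Y t]).
  rewrite -lee_fin /nat_tail ceil_max_geSS EFinD !fineK ?fin_num_measure //.
  exact: measureU2.
apply: le_trans tailU _; rewrite mulrDl lerD //.
- apply: le_trans (@exp_tail_bound _ _ _ P X c1 k.+1%:R mX c1_gt0 EX) _.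
  by apply: ler_wpM2l => //; apply: exp_tail_min; rewrite ge_min lexx.
- apply: le_trans (@exp_tail_bound _ _ _ P Y c2 k.+1%:R mY c2_gt0 EY) _.
  by apply: ler_wpM2l => //; apply: exp_tail_min; rewrite ge_min lexx orbT.
Qed.

Lemma ceil_max_tail :
  exists B, forall k, nat_tail P ceil_max k <= B * expR (- (Num.min c1 c2 * k%:R)).
Proof.
have ec1 : 1 <= expR c by rewrite -expR0 ler_expR le_min !ltW.
have Ex0 := Ex_ge0; have Ey0 := Ey_ge0.
have mQ := measurable_ceil_max.
exists ((1 + Ex + Ey) * expR c) => -[|[|k]].
- rewrite mulr0 oppr0 expR0 mulr1; apply: le_trans (nat_tail_le1 P mQ 0%N) _.
  by rewrite -[1]mulr1 ler_pM //; lra.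
- rewrite mulr1 -mulrA -expRD addrN expR0 mulr1.
  by apply: le_trans (nat_tail_le1 P mQ 1%N) _; lra.
apply: le_trans (ceil_max_tailSS k) _.
have -> : (1 + Ex + Ey) * expR c * expR (- (c * k.+2%:R)) =
    (1 + Ex + Ey) * expR (- (c * k.+1%:R)).
  by rewrite -mulrA -expRD; congr (_ * expR _); rewrite !mulrS; ring.
by rewrite ler_wpM2r ?expR_ge0 //; lra.
Qed.

End ceil_max.

Theorem mainTheorem12 (R : realType) (d : measure_display) (T : measurableType d)
  (P : probability T R) (X Y : T -> R)
  (mX : measurable_fun setT X) (mY : measurable_fun setT Y)
  (hX : light_tailed P X) (hY : light_tailed P Y) :
  exists (d' : measure_display) (T' : measurableType d') (P' : probability T' R)
         (X' Y' xi eta : T' -> R),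
    [/\ measurable_fun setT X', measurable_fun setT Y',
        measurable_fun setT xi & measurable_fun setT eta] /\
    same_joint_law P X Y P' X' Y' /\
    indep2 P' xi eta /\ ident_distr P' xi eta /\ light_tailed P' xi /\
    {ae P', forall t, Num.max (X' t) (Y' t) <= Num.min (xi t) (eta t)}.
Proof.
have [c1 [c1_gt0 EX]] := hX; have [c2 [c2_gt0 EY]] := hY.
have mN := measurable_ceil_max mX mY.
have [B tailB] := ceil_max_tail mX mY c1_gt0 c2_gt0 EX EY.
exists _, _, (min_coupling P mN), (X \o fst), (Y \o fst),
  (fun w => (w.2.1)%:R), (fun w => (w.2.2)%:R).
split; [split|split; [|split; [|split; [|split]]]].
- exact: measurableT_comp mX measurable_fst.
- exact: measurableT_comp mY measurable_fst.
- exact: (measurableT_comp (@measurable_natr R)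
    (measurableT_comp measurable_fst measurable_snd)).
- exact: (measurableT_comp (@measurable_natr R)
    (measurableT_comp measurable_snd measurable_snd)).
- move=> A mA.
  apply: (@min_coupling_marginal _ _ _ P _ mN ((fun t => (X t, Y t)) @^-1` A)).
  by rewrite -[X in measurable X]setTI; exact: (measurable_fun_pair mX mY measurableT mA).
- exact: min_coupling_indep.
- exact: min_coupling_ident_distr.
- by apply: min_coupling_light_tailed tailB; rewrite lt_min c1_gt0 c2_gt0.
- apply: filterS (min_coupling_min P mN) => -[t [i j]] /= minN.
  rewrite le_min; apply/andP; split; apply: le_trans (max_le_ceil_max X Y t) _;
    by rewrite ler_nat -minN ?geq_minl ?geq_minr.
Qed.
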